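(* Let $F$ be an infinite field of characteristic $p>2$ and $k$ a positive integer. Then $E^{k^\ast}$ satisfies the $\mathbb{Z}$-graded identity $x^p$ for every variable $x$ of degree $\alpha(x)\neq 0$.
   Context: $L$ is a vector space over $F$ with basis $e_1,e_2,\dots$, $E$ its unital Grassmann algebra (basis $1$ and $e_{i_1}\cdots e_{i_k}$, $i_1<\cdots<i_k$, with $e_ie_j=-e_je_i$). $E^{k^\ast}$ is $E$ with the $\mathbb{Z}$-grading induced by $\|e_i\|=1$ for $i\le k$, $\|e_i\|=0$ for $i>k$, a basis monomial having degree the sum of the degrees of its factors and $1$ having degree $0$. A graded polynomial in variables with prescribed integer degrees $\alpha(x)$ is a graded identity of a $\mathbb{Z}$-graded algebra $A$ if it vanishes whenever each variable $x$ is replaced by an element of the homogeneous component $A_{\alpha(x)}$. *)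

From HB Require Import structures.
From mathcomp Require Import all_boot all_order all_algebra.
From mathcomp Require Import finmap.
Set Implicit Arguments. Unset Strict Implicit. Unset Printing Implicit Defensive.
Import Order.TTheory GRing.Theory Num.Theory.
Local Open Scope fset_scope.
Local Open Scope ring_scope.

(* Basis monomials of the Grassmann algebra E: e_{i_1}...e_{i_m} with
   i_1 < ... < i_m is encoded by the finite set {i_1-1,...,i_m-1} of
   natural numbers (generator e_i has index i-1; the empty set is 1). *)
Definition monomial := {fset nat}.

Definition gelt (F : fieldType) := monomial -> F.

Definition finsupp (F : fieldType) (x : gelt F) : Prop :=
  exists s : seq monomial, forall S, x S != 0 -> S \in s.

(* sign of reordering e_A * e_B (A, B disjoint) into increasing order *)
Definition inversions (A B : monomial) : nat :=
  (\sum_(i <- A) \sum_(j <- B) (j < i)%N)%N.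

Definition gmul (F : fieldType) (x y : gelt F) : gelt F :=
  fun S => \sum_(A <- fpowerset S)
             (-1) ^+ inversions A (S `\` A) * x A * y (S `\` A).

Definition gone (F : fieldType) : gelt F :=
  fun S => if S == fset0 then 1 else 0.

Definition gpow (F : fieldType) (x : gelt F) (n : nat) : gelt F :=
  iter n (gmul x) (gone F).

(* Z-grading of E^{k*}: ||e_i|| = 1 for i <= k (index i-1 < k), 0 otherwise *)
Definition kdeg (k : nat) (S : monomial) : int :=
  (#|` [fset i in S | (i < k)%N]|)%:Z.

Definition homog (F : fieldType) (k : nat) (d : int) (x : gelt F) : Prop :=
  finsupp x /\ forall S, x S != 0 -> kdeg k S = d.

From Pilot Require Import Defs.
From HB Require Import structures.
From mathcomp Require Import all_boot all_order all_algebra.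
From mathcomp Require Import finmap ring.
From Stdlib Require Import FunctionalExtensionality.
Set Implicit Arguments. Unset Strict Implicit. Unset Printing Implicit Defensive.
Import GRing.Theory.
Local Open Scope fset_scope.
Local Open Scope ring_scope.

(* An element x of nonzero degree has no constant term.  Split x = b + a into
   its odd part b and its even part a: a is central, and b * b = 0 because
   2 is invertible, so (b + a)^p = a^p + p a^(p-1) b = a^p.  Peeling the
   monomials of a off one at a time, each of them central and of square zero
   (they are nonempty), the same binomial step shows a^p = 0. *)

Section FsetDifference.
Variable K : choiceType.
Implicit Types A B : {fset K}.

Lemma fsetUDK A B : A `<=` B -> A `|` (B `\` A) = B.
Proof. by move=> AB; rewrite fsetUDl fsetDv fsetD0; apply/fsetUidPr. Qed.

Lemma fdisjointXD A B : [disjoint A & B `\` A].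
Proof. by apply/fdisjointP => i iA; rewrite !inE iA. Qed.

Lemma fsetUKD A B : [disjoint B & A] -> (A `|` B) `\` A = B.
Proof. by move=> dBA; rewrite fsetDUl fsetDv fset0U; apply/fsetDidPl. Qed.

End FsetDifference.

Section BigFpowerset.
Variables (R : Type) (idx : R) (op : Monoid.com_law idx) (K : choiceType).
Implicit Types A B C S : {fset K}.

Lemma big_fsetU_disjoint A B (f : K -> R) : [disjoint A & B] ->
  \big[op/idx]_(i <- A `|` B) f i =
  op (\big[op/idx]_(i <- A) f i) (\big[op/idx]_(i <- B) f i).
Proof.
move=> dAB; rewrite (big_fsetID _ (mem A)) /=; congr (op _ _); apply: eq_fbigl => i.
  by rewrite !inE /=; case: (i \in A); rewrite /= ?andbT ?andbF.
rewrite !inE /=; case iA: (i \in A) => /=; last by rewrite andbT.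
by apply/esym/negP => iB; move/fdisjointP: dAB => /(_ i iA); rewrite iB.
Qed.

Lemma big_fpowerset_compl (G : {fset K} -> R) S :
  \big[op/idx]_(A <- fpowerset S) G (S `\` A) = \big[op/idx]_(A <- fpowerset S) G A.
Proof.
have im : [fset S `\` A | A in fpowerset S] =i fpowerset S.
  move=> C; apply/imfsetP/idP => [[A _ ->]|]; first by rewrite fpowersetE fsubsetDl.
  by rewrite fpowersetE => CS; exists (S `\` C); rewrite ?fpowersetE ?fsubsetDl ?fsetDK.
rewrite -[RHS](eq_fbigl _ _ im) (big_imfset _ _ (h := fsetD S)) //= => A B.
rewrite !fpowersetE => AS BS eAB.
by rewrite -(fsetDK AS) eAB fsetDK.
Qed.

Lemma big_fpowerset_exchange (G : {fset K} -> {fset K} -> R) S :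
  \big[op/idx]_(C <- fpowerset S) \big[op/idx]_(A <- fpowerset C) G A C =
  \big[op/idx]_(A <- fpowerset S) \big[op/idx]_(B <- fpowerset (S `\` A)) G A (A `|` B).
Proof.
transitivity (\big[op/idx]_(C <- fpowerset S)
                \big[op/idx]_(A <- fpowerset S | A `<=` C) G A C).
  apply: eq_big_seq => C; rewrite fpowersetE => CS; apply: eq_fbigl_cond => A.
  rewrite !inE /= !fpowersetE andbT; apply/idP/andP => [AC|[] //].
  by split=> //; apply: fsubset_trans AC CS.
under eq_bigr do rewrite big_mkcond /=.
rewrite exchange_big /=; apply: eq_big_seq => A; rewrite fpowersetE => AS.
rewrite -big_mkcond /= big_fset_condE.
have im : [fset A `|` B | B in fpowerset (S `\` A)] =i [fset C in fpowerset S | A `<=` C].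
  move=> C; rewrite !inE /= fpowersetE; apply/imfsetP/andP => [[B] /=|[CS AC]].
    by rewrite fpowersetCE => /andP[BS _] ->; rewrite fsubUset AS BS fsubsetUl.
  by exists (C `\` A); rewrite ?fpowersetE ?fsetSD ?fsetUDK.
rewrite -(eq_fbigl _ _ im) (big_imfset _ _ (h := fsetU A)) //= => B1 B2.
rewrite !fpowersetCE => /andP[_ dB1] /andP[_ dB2] eB.
by rewrite -(fsetUKD dB1) eB fsetUKD.
Qed.

End BigFpowerset.

Section Inversions.
Implicit Types A B C : monomial.

Lemma inversions0l B : inversions fset0 B = 0%N.
Proof. by rewrite /inversions big_seq_fset0. Qed.

Lemma inversions0r A : inversions A fset0 = 0%N.
Proof. by rewrite /inversions big1 // => i _; rewrite big_seq_fset0. Qed.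

Lemma inversionsUl A B C : [disjoint A & B] ->
  inversions (A `|` B) C = (inversions A C + inversions B C)%N.
Proof. by move=> dAB; rewrite /inversions big_fsetU_disjoint. Qed.

Lemma inversionsUr A B C : [disjoint B & C] ->
  inversions A (B `|` C) = (inversions A B + inversions A C)%N.
Proof.
move=> dBC; rewrite /inversions -big_split /=; apply: eq_bigr => i _.
by rewrite big_fsetU_disjoint.
Qed.

Lemma inversionsC A B : [disjoint A & B] ->
  (inversions A B + inversions B A = #|` A| * #|` B|)%N.
Proof.
move=> dAB; rewrite /inversions [X in (_ + X)%N]exchange_big /= -big_split /=.
rewrite card_fset_sum1 big_distrl /=; apply: eq_big_seq => i iA.
rewrite -big_split /= card_fset_sum1 big_distrr /=; apply: eq_big_seq => j jB.
have : i != j by apply: contraTneq jB => <-; move/fdisjointP: dAB; apply.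
by rewrite muln1; case: ltngtP.
Qed.

End Inversions.

Lemma pchar_two_neq0 (R : nzSemiRingType) p : p \in [pchar R] -> (2 < p)%N ->
  (2%:R : R) != 0.
Proof. by move=> charRp p_gt2; rewrite -(dvdn_pcharf charRp) gtnNdvd. Qed.

Section GrassmannAlgebra.
Variable F : fieldType.
Implicit Types (x y z a b : gelt F) (A B S : monomial).

Local Notation sg A B := ((-1) ^+ inversions A B : F).

Definition gzero : gelt F := fun=> 0.
Definition gadd x y : gelt F := fun S => x S + y S.
Definition gscale (c : F) x : gelt F := fun S => c * x S.

Lemma gmulDl x y z : gmul (gadd x y) z = gadd (gmul x z) (gmul y z).
Proof.
apply: functional_extensionality => S; rewrite /gmul /gadd -big_split /=.
by apply: eq_bigr => A _; ring.
Qed.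

Lemma gmulDr x y z : gmul x (gadd y z) = gadd (gmul x y) (gmul x z).
Proof.
apply: functional_extensionality => S; rewrite /gmul /gadd -big_split /=.
by apply: eq_bigr => A _; ring.
Qed.

Lemma gmulZr c x y : gmul x (gscale c y) = gscale c (gmul x y).
Proof.
apply: functional_extensionality => S; rewrite /gmul /gscale mulr_sumr.
by apply: eq_bigr => A _; ring.
Qed.

Lemma gmul0r x : gmul gzero x = gzero.
Proof.
apply: functional_extensionality => S; rewrite /gmul big1 // => A _.
by rewrite mulr0 mul0r.
Qed.

Lemma gmulr0 x : gmul x gzero = gzero.
Proof.
by apply: functional_extensionality => S; rewrite /gmul big1 // => A _; rewrite mulr0.
Qed.

Lemma gmul1l x : gmul (gone F) x = x.
Proof.
apply: functional_extensionality => S; rewrite /gmul.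
rewrite (big_fsetD1 fset0) ?fpowersetE ?fsub0set //= big1_fset.
  by rewrite fsetD0 inversions0l /gone eqxx !mul1r addr0.
by move=> A; rewrite !inE => /andP[/negPf A0 _] _; rewrite /gone A0 mulr0 mul0r.
Qed.

Lemma gmulr1 x : gmul x (gone F) = x.
Proof.
apply: functional_extensionality => S; rewrite /gmul.
rewrite (big_fsetD1 S) ?fpowersetE ?fsubset_refl //= big1_fset.
  by rewrite fsetDv inversions0r /gone eqxx mul1r mulr1 addr0.
move=> A; rewrite !inE fpowersetE => /andP[AS SA] _; rewrite /gone.
case: eqP => [/eqP|]; last by rewrite mulr0.
by rewrite fsetD_eq0 => SsA; case/negP: AS; rewrite eqEfsubset SA SsA.
Qed.

Lemma gmulA x y z : gmul x (gmul y z) = gmul (gmul x y) z.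
Proof.
apply: functional_extensionality => S; rewrite /gmul.
under eq_bigr do rewrite mulr_sumr.
under [RHS]eq_bigr do rewrite mulr_sumr mulr_suml.
rewrite big_fpowerset_exchange; apply: eq_big_seq => A _.
apply: eq_big_seq => B; rewrite fpowersetCE => /andP[BS dBA].
rewrite (fsetUKD dBA) -fsetDDl; set T := (S `\` A) `\` B.
have SA : S `\` A = B `|` T.
  by rewrite /T fsetUDK // fsubsetD BS.
rewrite SA inversionsUr ?fdisjointXD // inversionsUl 1?fdisjoint_sym // !exprD; ring.
Qed.

Lemma gmulC_sign x y S : gmul y x S =
  \sum_(A <- fpowerset S)
     (-1) ^+ (#|` A| * #|` (S `\` A)|) * sg A (S `\` A) * x A * y (S `\` A).
Proof.
rewrite /gmul -big_fpowerset_compl; apply: eq_big_seq => A; rewrite fpowersetE => AS.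
rewrite fsetDK // -(inversionsC (fdisjointXD A S)) exprD.
by rewrite [_ * _ * (-1) ^+ _]mulrAC -expr2 sqrr_sign mul1r mulrAC.
Qed.

Lemma gpowS x n : gpow x n.+1 = gmul x (gpow x n).
Proof. by []. Qed.

Lemma gpow_comm a b n : gmul a b = gmul b a -> gmul b (gpow a n) = gmul (gpow a n) b.
Proof.
move=> ab; elim: n => [|n IH]; first by rewrite gmulr1 gmul1l.
by rewrite gpowS gmulA -ab -gmulA IH gmulA.
Qed.

Lemma gpowD_sq0 a b n : gmul a b = gmul b a -> gmul b b = gzero ->
  gpow (gadd b a) n.+1 = gadd (gpow a n.+1) (gscale n.+1%:R (gmul (gpow a n) b)).
Proof.
move=> ab bb; elim: n => [|n IH].
  rewrite /= !gmulr1 gmul1l; apply: functional_extensionality => S.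
  by rewrite /gadd /gscale mul1r addrC.
have aab : gmul a (gmul (gpow a n) b) = gmul (gpow a n.+1) b by rewrite gmulA.
have bab : gmul b (gmul (gpow a n) b) = gzero.
  by rewrite gmulA gpow_comm // -gmulA bb gmulr0.
rewrite gpowS IH gmulDl !gmulDr !gmulZr aab bab gpow_comm // -gpowS.
apply: functional_extensionality => S; rewrite /gadd /gscale /gzero /=.
rewrite [n.+2%:R]mulrSr; ring.
Qed.

Lemma gpowD_sq0_pchar a b n : (n%:R : F) = 0 -> (0 < n)%N ->
  gmul a b = gmul b a -> gmul b b = gzero -> gpow (gadd b a) n = gpow a n.
Proof.
move=> n0 n_gt0 ab bb; rewrite -(prednK n_gt0) gpowD_sq0 // prednK // n0.
by apply: functional_extensionality => S; rewrite /gadd /gscale mul0r addr0.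
Qed.

Definition supported_on (P : pred monomial) x := forall S, x S != 0 -> P S.

Definition grestr (P : pred monomial) x : gelt F := fun S => if P S then x S else 0.

Definition odd_monomial : pred monomial := fun S => odd #|` S|.

Lemma grestr_split P x : gadd (grestr P x) (grestr (predC P) x) = x.
Proof.
apply: functional_extensionality => S; rewrite /gadd /grestr /=.
by case: (P S); rewrite ?add0r ?addr0.
Qed.

Lemma grestr_supported P x : supported_on P (grestr P x).
Proof. by move=> S; rewrite /grestr; case: (P S); rewrite ?eqxx. Qed.

Lemma grestr_supportedW P Q x : supported_on Q x -> supported_on Q (grestr P x).
Proof. by move=> xQ S; rewrite /grestr; case: (P S) => [/xQ|]; rewrite ?eqxx. Qed.

Lemma gmulC_even x y : supported_on (predC odd_monomial) x -> gmul y x = gmul x y.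
Proof.
move=> xe; apply: functional_extensionality => S; rewrite gmulC_sign /gmul.
apply: eq_bigr => A _; have [->|/xe /negPf Aeven] := eqVneq (x A) 0.
  by rewrite !mulr0 !mul0r.
by rewrite -signr_odd oddM [odd _]Aeven mul1r.
Qed.

Lemma gmul_odd_self x : (2%:R : F) != 0 -> supported_on odd_monomial x ->
  gmul x x = gzero.
Proof.
move=> two xo; apply: functional_extensionality => S.
have : gmul x x S = - gmul x x S.
  rewrite {1}gmulC_sign /gmul -sumrN; apply: eq_bigr => A _.
  have [->|/xo oA] := eqVneq (x A) 0; first by rewrite !mulr0 !mul0r oppr0.
  have [->|/xo oB] := eqVneq (x (S `\` A)) 0; first by rewrite !mulr0 oppr0.
  by rewrite -signr_odd oddM [odd _]oA [odd _]oB mulN1r !mulNr.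
move/eqP; rewrite -subr_eq0 opprK -mulr2n -mulr_natr mulf_eq0 (negPf two) orbF.
by move/eqP.
Qed.

Lemma gmul_restr1_self A y : y fset0 = 0 ->
  gmul (grestr (pred1 A) y) (grestr (pred1 A) y) = gzero.
Proof.
move=> y0; apply: functional_extensionality => S; rewrite /gmul big1 // => B _.
rewrite /grestr /=; have [->|_] := eqVneq B A; last by rewrite mulr0 mul0r.
have [SA|_] := eqVneq (S `\` A) A; last by rewrite mulr0.
have /eqP A0 : A == fset0 by have := fdisjointXD A S; rewrite SA -fsetI_eq0 fsetIid.
by rewrite A0 y0 mulr0 mul0r.
Qed.

Lemma gpow_even_eq0 n y : (n%:R : F) = 0 -> (0 < n)%N ->
  supported_on (predC odd_monomial) y -> y fset0 = 0 -> Defs.finsupp y ->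
  gpow y n = gzero.
Proof.
move=> n0 n_gt0 ye y0 [s]; elim: s y ye y0 => [|A s IH] y ye y0 ys.
  have -> : y = gzero.
    by apply: functional_extensionality => S; have [|/ys] := eqVneq (y S) 0.
  by rewrite -(prednK n_gt0) gpowS gmul0r.
rewrite -(grestr_split (pred1 A) y) gpowD_sq0_pchar ?gmul_restr1_self //.
  apply: IH; first exact: grestr_supportedW.
    by rewrite /grestr /=; case: ifP.
  move=> S; rewrite /grestr /=; have [_|SA /ys] := eqVneq S A; first by rewrite eqxx.
  by rewrite in_cons (negPf SA).
by rewrite gmulC_even //; apply: grestr_supportedW.
Qed.

Lemma finsupp_grestr P x : Defs.finsupp x -> Defs.finsupp (grestr P x).
Proof. by move=> [s xs]; exists s; apply: (@grestr_supportedW P (fun S => S \in s)). Qed.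

Lemma kdeg_fset0 k : kdeg k fset0 = 0.
Proof.
rewrite /kdeg (_ : [fset i in fset0 | _] = fset0) ?cardfs0 //.
by apply/fsetP => i; rewrite !inE.
Qed.

Lemma homog_fset0 k d x : d != 0 -> homog k d x -> x fset0 = 0.
Proof.
by move=> d0 [_ xd]; apply/eqP; apply: contraNT d0 => /xd <-; rewrite kdeg_fset0.
Qed.

End GrassmannAlgebra.

Theorem mainTheorem5 (F : fieldType) (p k : nat)
  (F_infinite : forall s : seq F, exists a : F, a \notin s)
  (charFp : p \in [pchar F]) (p_gt2 : (2 < p)%N) (k_gt0 : (0 < k)%N) :
  forall (d : int), d != 0 ->
  forall x : gelt F, homog k d x ->
  forall S : monomial, gpow x p S = 0.
Proof.
move=> d d0 x xd S.
have p0 : (p%:R : F) = 0 := pcharf0 charFp.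
have p_gt0 := prime_gt0 (pcharf_prime charFp).
have x0 := homog_fset0 d0 xd.
rewrite -(grestr_split odd_monomial x) gpowD_sq0_pchar //.
- rewrite gpow_even_eq0 //; first exact: grestr_supported.
  exact/finsupp_grestr/xd.1.
- exact/esym/gmulC_even/grestr_supported.
- exact/gmul_odd_self/grestr_supported/(pchar_two_neq0 charFp).
Qed.
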